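(* Let $p\in\mathbb R$ and consider the third order linear differential equation $$x^2R'''(x)+4xR''(x)+(2-4p^2+4x^2)R'(x)-\frac{4p^2}{x}R(x)=0.$$ It admits a unique formal solution of the form $R(x)=\frac1\pi+\frac1\pi\sum_{n\ge1}\pi^{n}d_n x^{-n}$. For this solution $d_{2n-1}=0$ for all $n\ge1$, and $d_{2n}=c_{2n}$ where $$c_2=-\frac{p^2}{2\pi^2},\qquad c_{2n}=-\frac{1}{\pi^{2n}}\frac{(2n-3)!!}{(2n)!!}\prod_{l=0}^{n-1}(p^2-l^2)\quad(n\ge2),$$ equivalently $c_{2n+2}=\frac{1}{\pi^2}\frac{2n-1}{2(n+1)}(p^2-n^2)c_{2n}$ for $n\ge1$. In particular $c_{2n}=0$ for integer $p\ge0$ and $n>p$.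
   Context: The function $R(x)=\frac1\pi\rho_{(1),\infty}(x/\pi;2,p,0)$ satisfies this differential equation, where $\rho_{(1),\infty}(x;\beta,p,q)=\lim_{N\to\infty}\frac{2\pi}{N}\rho_{(1),N}(-\pi\,\mathrm{sgn}(x)+2\pi x/N)$ is the bulk-scaled one-point density at the spectrum singularity of the generalised circular Jacobi $\beta$ ensemble (probability density on $(-\pi,\pi]^N$ proportional to $\prod_{l=1}^N e^{q\theta_l}|1+e^{i\theta_l}|^{\beta p}\prod_{j<k}|e^{i\theta_k}-e^{i\theta_j}|^\beta$, one-point density $\rho_{(1),N}$ integrating to $N$). The double factorial $(2n-3)!!$ is the product of odd integers up to $2n-3$ (with $1!!=1$), and $(2n)!!=2^n n!$. *)

From Stdlib Require Import Reals ZArith Lia Lra.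
Open Scope R_scope.

(* A formal series in powers of x is represented by its coefficient
   function a : Z -> R, where  a k  is the coefficient of x^(-k).
   (So R(x) = sum_k a k * x^(-k).)  All operations below are pointwise on
   coefficients (no infinite sums are involved). *)

(* formal d/dx :  d/dx x^(-(k-1)) = -(k-1) x^(-k) *)
Definition fderiv (a : Z -> R) : Z -> R :=
  fun k => - IZR (k - 1) * a (k - 1)%Z.

(* multiplication by x^m :  x^m * x^(-j) = x^(-(j-m)) *)
Definition fmulx (m : Z) (a : Z -> R) : Z -> R :=
  fun k => a (k + m)%Z.

Definition ode_lhs (p : R) (a : Z -> R) : Z -> R :=
  fun k =>
    fmulx 2 (fderiv (fderiv (fderiv a))) k
    + 4 * fmulx 1 (fderiv (fderiv a)) k
    + (2 - 4 * p ^ 2) * fderiv a k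
    + 4 * fmulx 2 (fderiv a) k
    - 4 * p ^ 2 * fmulx (-1) a k.

Definition is_formal_solution (p : R) (a : Z -> R) : Prop :=
  forall k : Z, ode_lhs p a k = 0.

(* The formal series  1/pi + (1/pi) * sum_{n>=1} pi^n d_n x^(-n).
   (d 0 is not used.) *)
Definition series_of (d : nat -> R) : Z -> R :=
  fun k =>
    match k with
    | Z0 => 1 / PI
    | Zpos q => (1 / PI) * PI ^ (Pos.to_nat q) * d (Pos.to_nat q)
    | Zneg _ => 0
    end.

Fixpoint dfact (n : nat) : nat :=
  match n with
  | O => 1
  | S O => 1
  | S (S m as n') => (S n') * dfact m
  end%nat.

Fixpoint prod_pl (p : R) (n : nat) : R :=
  match n with
  | O => 1
  | S m => prod_pl p m * (p ^ 2 - (INR m) ^ 2)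
  end.

(* c_{2n} (meaningful for n >= 1) *)
Definition c2n (p : R) (n : nat) : R :=
  if Nat.eqb n 1 then - p ^ 2 / (2 * PI ^ 2)
  else - (1 / PI ^ (2 * n)) * (INR (dfact (2 * n - 3)) / INR (dfact (2 * n)))
         * prod_pl p n.

From Stdlib Require Import Reals ZArith Lia Lra.
Open Scope R_scope.

(* On coefficients a_k of x^(-k), the operator of the ODE acts as
     ode_lhs a k = -4 (k+1) a_(k+1) - (k-2) ((k-1)^2 - 4 p^2) a_(k-1),
   a two-term recursion with step 2.  For a series 1/pi + 1/pi sum pi^n d_n x^(-n)
   we have a_n = pi^(n-1) e_n, where e is d with e_0 := 1 ("normalized").
   The equations become e_1 = 0 and, uniformly for every n >= 0,
     e_(n+2) = rec_ratio p n * e_n,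
   so the series is a solution iff e is the explicit sequence sol_coeff p fixed by
   this recursion.  This gives existence and uniqueness at once.  Iterating the
   recursion, odd coefficients vanish and even ones satisfy the recursion of
   c2n, which we verify directly from the closed formula (c2n_succ); the closed
   formula contains prod_(l<n) (p^2 - l^2), which vanishes for p = k < n. *)

Lemma PI_neq0 : PI <> 0.
Proof. generalize PI_RGT_0; lra. Qed.

Lemma ode_lhs_two_term p a k : ode_lhs p a k =
  -4 * IZR (k + 1) * a (k + 1)%Z
  - IZR (k - 2) * (IZR (k - 1) ^ 2 - 4 * p ^ 2) * a (k - 1)%Z.
Proof.
  unfold ode_lhs, fmulx, fderiv.
  replace (k + 2 - 1 - 1 - 1)%Z with (k - 1)%Z by ring.
  replace (k + 1 - 1 - 1)%Z with (k - 1)%Z by ring.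
  replace (k + 2 - 1)%Z with (k + 1)%Z by ring.
  replace (k + (-1))%Z with (k - 1)%Z by ring.
  replace (k + 1 - 1)%Z with k by ring.
  rewrite ?minus_IZR, ?plus_IZR; simpl; ring.
Qed.

Definition normalized (d : nat -> R) (n : nat) : R :=
  match n with O => 1 | S _ => d n end.

Lemma series_of_nat d n : series_of d (Z.of_nat n) = PI ^ n / PI * normalized d n.
Proof.
  destruct n as [|n]; simpl.
  - field; exact PI_neq0.
  - rewrite SuccNat2Pos.id_succ; simpl; field; exact PI_neq0.
Qed.

Lemma series_of_neg d k : (k < 0)%Z -> series_of d k = 0.
Proof. destruct k; simpl; auto; lia. Qed.

Definition rec_ratio (p : R) (n : nat) : R :=
  - (INR n - 1) * (INR n ^ 2 - 4 * p ^ 2) / (4 * (INR n + 2) * PI ^ 2).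

Lemma ode_at_0 p d : ode_lhs p (series_of d) 0%Z = -4 * normalized d 1.
Proof.
  rewrite ode_lhs_two_term, (series_of_neg d (0 - 1)) by lia.
  replace (0 + 1)%Z with (Z.of_nat 1) by reflexivity.
  rewrite series_of_nat; simpl; field; exact PI_neq0.
Qed.

Lemma ode_at_succ p d n :
  ode_lhs p (series_of d) (Z.of_nat (S n)) =
  -4 * (INR n + 2) * PI ^ S n
  * (normalized d (S (S n)) - rec_ratio p n * normalized d n).
Proof.
  rewrite ode_lhs_two_term.
  replace (Z.of_nat (S n) + 1)%Z with (Z.of_nat (S (S n))) by lia.
  replace (Z.of_nat (S n) - 1)%Z with (Z.of_nat n) by lia.
  replace (Z.of_nat (S n) - 2)%Z with (Z.of_nat n - 1)%Z by lia.
  rewrite !series_of_nat, minus_IZR, <- INR_IZR_INZ, <- !INR_IZR_INZ, !S_INR.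
  unfold rec_ratio; pose proof (pos_INR n); pose proof PI_neq0.
  simpl pow; field; lra.
Qed.

Lemma formal_solution_iff p d :
  is_formal_solution p (series_of d) <->
  normalized d 1 = 0 /\
  forall n, normalized d (S (S n)) = rec_ratio p n * normalized d n.
Proof.
  pose proof PI_neq0 as HPI.
  split.
  - intros Hsol; split.
    + pose proof (Hsol 0%Z) as H0; rewrite ode_at_0 in H0; lra.
    + intros n; pose proof (Hsol (Z.of_nat (S n))) as Hn; rewrite ode_at_succ in Hn.
      pose proof (pos_INR n); pose proof (pow_nonzero PI (S n) HPI).
      apply Rmult_integral in Hn as [Hn|Hn]; [|lra].
      apply Rmult_integral in Hn as [Hn|]; [lra|contradiction].
  - intros [H1 Hrec] k.
    destruct (Z_lt_le_dec k 0) as [Hk|Hk].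
    + rewrite ode_lhs_two_term, (series_of_neg d (k - 1)) by lia.
      destruct (Z.eq_dec k (-1)) as [->|Hk1]; [simpl; ring|].
      rewrite series_of_neg by lia; ring.
    + destruct (Z_of_nat_complete k Hk) as [[|n] ->].
      * rewrite ode_at_0, H1; ring.
      * rewrite ode_at_succ, Hrec; ring.
Qed.

Fixpoint sol_coeff (p : R) (n : nat) : R :=
  match n with
  | O => 1
  | S O => 0
  | S (S m) => rec_ratio p m * sol_coeff p m
  end.

Lemma recursion_unique p (e : nat -> R) :
  e O = 1 -> e 1%nat = 0 ->
  (forall n, e (S (S n)) = rec_ratio p n * e n) ->
  forall n, e n = sol_coeff p n.
Proof.
  intros H0 H1 Hrec.
  assert (Hpair : forall n, e n = sol_coeff p n /\ e (S n) = sol_coeff p (S n)).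
  { induction n as [|n [IH IHS]]; [auto|].
    split; [exact IHS|]. rewrite Hrec, IH; reflexivity. }
  intros n; apply Hpair.
Qed.

Lemma formal_solution_coeff p d :
  is_formal_solution p (series_of d) -> forall n, (1 <= n)%nat -> d n = sol_coeff p n.
Proof.
  intros Hsol n Hn; apply formal_solution_iff in Hsol as [H1 Hrec].
  destruct n as [|n]; [lia|].
  exact (recursion_unique p (normalized d) eq_refl H1 Hrec (S n)).
Qed.

(* Existence: sol_coeff is itself its own normalization, so it gives a solution. *)
Lemma sol_coeff_is_solution p : is_formal_solution p (series_of (sol_coeff p)).
Proof. apply formal_solution_iff; split; [reflexivity|now intros []]. Qed.

Lemma sol_coeff_SS p n : sol_coeff p (S (S n)) = rec_ratio p n * sol_coeff p n.
Proof. reflexivity. Qed.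

Lemma sol_coeff_odd p n : sol_coeff p (2 * n + 1) = 0.
Proof.
  induction n as [|n IH]; [reflexivity|].
  replace (2 * S n + 1)%nat with (S (S (2 * n + 1))) by lia.
  rewrite sol_coeff_SS, IH; ring.
Qed.

Lemma dfact_SS k : dfact (S (S k)) = (S (S k) * dfact k)%nat.
Proof. reflexivity. Qed.

Lemma dfact_neq0 k : INR (dfact k) <> 0.
Proof.
  apply not_0_INR.
  enough (H : forall j, dfact j <> 0%nat /\ dfact (S j) <> 0%nat) by apply H.
  intros j; induction j as [|j [IH IHS]]; [simpl; lia|].
  split; [exact IHS|]. rewrite dfact_SS; lia.
Qed.

Lemma c2n_succ p n : (1 <= n)%nat ->
  c2n p (S n) = 1 / PI ^ 2 * ((2 * INR n - 1) / (2 * (INR n + 1)))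
                * (p ^ 2 - INR n ^ 2) * c2n p n.
Proof.
  intros Hn; pose proof PI_neq0 as HPI.
  destruct n as [|[|m]]; [lia| unfold c2n; simpl; field; exact HPI |].
  unfold c2n; simpl Nat.eqb; cbv iota.
  replace (2 * S (S (S m)) - 3)%nat with (S (S (2 * m + 1))) by lia.
  replace (2 * S (S m) - 3)%nat with (2 * m + 1)%nat by lia.
  replace (PI ^ (2 * S (S (S m)))) with (PI ^ 2 * PI ^ (2 * S (S m)))
    by (rewrite <- pow_add; f_equal; lia).
  replace (2 * S (S (S m)))%nat with (S (S (2 * S (S m)))) by lia.
  change (prod_pl p (S (S (S m))))
    with (prod_pl p (S (S m)) * (p ^ 2 - INR (S (S m)) ^ 2)).
  rewrite !dfact_SS.
  pose proof (dfact_neq0 (2 * m + 1)); pose proof (dfact_neq0 (2 * S (S m))).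
  pose proof (pow_nonzero PI (2 * S (S m)) HPI); pose proof (pos_INR m).
  rewrite !mult_INR, !S_INR, !plus_INR, !mult_INR, !S_INR; simpl INR.
  field; repeat split; auto; lra.
Qed.

Lemma sol_coeff_even p n : (1 <= n)%nat -> sol_coeff p (2 * n) = c2n p n.
Proof.
  pose proof PI_neq0 as HPI.
  induction n as [|n IH]; intros Hn; [lia|].
  replace (2 * S n)%nat with (S (S (2 * n))) by lia; rewrite sol_coeff_SS.
  destruct n as [|n]; [unfold rec_ratio, c2n; simpl; field; exact HPI|].
  rewrite IH, (c2n_succ p (S n)) by lia.
  unfold rec_ratio; rewrite mult_INR; simpl (INR 2); pose proof (pos_INR (S n)).
  field; repeat split; auto; lra.
Qed.

(* For p = k a natural number, prod_(l<n) (p^2 - l^2) has the factor l = k. *)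
Lemma prod_pl_nat_vanishes k n : (k < n)%nat -> prod_pl (INR k) n = 0.
Proof.
  induction n as [|n IH]; intros Hkn; [lia|]; simpl.
  destruct (Nat.eq_dec k n) as [->|Hne]; [ring|].
  rewrite IH by lia; ring.
Qed.

Lemma c2n_nat_vanishes k n : (k < n)%nat -> c2n (INR k) n = 0.
Proof.
  intros Hkn; unfold c2n; destruct (Nat.eqb_spec n 1) as [->|_].
  - replace k with O by lia; simpl; field; exact PI_neq0.
  - rewrite prod_pl_nat_vanishes by exact Hkn; ring.
Qed.

Theorem proposition2p4 (p : R) :
  (* existence of a formal solution of the given form *)
  (exists d : nat -> R, is_formal_solution p (series_of d)) /\
  (* uniqueness *)
  (forall d d' : nat -> R,
      is_formal_solution p (series_of d) -> is_formal_solution p (series_of d') ->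
      forall n : nat, (1 <= n)%nat -> d n = d' n) /\
  (* description of the solution *)
  (forall d : nat -> R, is_formal_solution p (series_of d) ->
      (forall n : nat, (1 <= n)%nat -> d (2 * n - 1)%nat = 0) /\
      (forall n : nat, (1 <= n)%nat -> d (2 * n)%nat = c2n p n)) /\
  (* equivalent recursion *)
  (forall n : nat, (1 <= n)%nat ->
      c2n p (S n) = 1 / PI ^ 2 * ((2 * INR n - 1) / (2 * (INR n + 1)))
                    * (p ^ 2 - INR n ^ 2) * c2n p n) /\
  (* vanishing for integer p >= 0 *)
  (forall k : nat, p = INR k -> forall n : nat, (k < n)%nat -> c2n p n = 0).
Proof.
  split; [exists (sol_coeff p); apply sol_coeff_is_solution|].
  split.
  { intros d d' Hd Hd' n Hn.
    rewrite (formal_solution_coeff p d Hd n Hn), (formal_solution_coeff p d' Hd' n Hn).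
    reflexivity. }
  split.
  { intros d Hd; split; intros n Hn;
      rewrite (formal_solution_coeff p d Hd) by lia.
    - replace (2 * n - 1)%nat with (2 * (n - 1) + 1)%nat by lia.
      apply sol_coeff_odd.
    - now apply sol_coeff_even. }
  split; [exact (c2n_succ p)|].
  intros k -> n Hkn; exact (c2n_nat_vanishes k n Hkn).
Qed.
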